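(* Let $\sigma$ be the substitution on $\{0,1\}$ given by $\sigma(0)=01$, $\sigma(1)=00$, let $X_\sigma\subset\{0,1\}^{\mathbb Z}$ be its subshift with shift map $S$, and let $T(x,z)=(Sx,z+1)$ on $X_\sigma\times\mathbb Z_3$. Then the minimal Cantor system $(X_\sigma\times\mathbb Z_3,T)$ is self-induced.
   Context: $X_\sigma$ is the set of bi-infinite sequences over $\{0,1\}$ all of whose finite subwords are subwords of $\sigma^k(a)$ for some letter $a$ and $k\ge1$; $S(x)_i=x_{i+1}$; $\mathbb Z_3$ is the $3$-adic integers. The system $(X_\sigma\times\mathbb Z_3,T)$ is a minimal Cantor system (a fact established separately in the paper). A minimal Cantor system $(X,T)$ is self-induced if there is a nonempty clopen proper $U\subsetneq X$ such that $(U,T_U)$, $T_U(x)=T^{r_U(x)}x$ with $r_U(x)=\inf\{n>0:T^nx\in U\}$, is topologically conjugate to $(X,T)$. *)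

From HB Require Import structures.
From mathcomp Require Import all_boot all_order all_algebra.
From mathcomp Require Import all_classical all_reals all_analysis.
Set Implicit Arguments. Unset Strict Implicit. Unset Printing Implicit Defensive.
Import Order.TTheory GRing.Theory Num.Theory.
Local Open Scope classical_set_scope.

(* The substitution sigma on {0,1} = bool (false = 0, true = 1):
   sigma(0) = 01, sigma(1) = 00, extended to words as a monoid morphism. *)
Definition sigma_letter (b : bool) : seq bool :=
  if b then [:: false; false] else [:: false; true].
Definition sigma_word (w : seq bool) : seq bool := flatten (map sigma_letter w).
Definition sigma_iter (k : nat) (a : bool) : seq bool := iter k sigma_word [:: a].

Notation biseq := {ptws int -> bool}.

Definition subword (x : biseq) (i : int) (n : nat) : seq bool :=
  [seq x (i + (j%:Z))%R | j <- iota 0 n].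

Definition X_sigma : set biseq :=
  [set x | forall (i : int) (n : nat),
     exists (a : bool) (k : nat), (1 <= k)%N /\ infix (subword x i n) (sigma_iter k a)].

Definition shift (x : biseq) : biseq := fun i => x (i + 1)%R.

(* 3-adic integers, represented by their digit sequences z = sum_n z_n 3^n,
   with the product (of discrete) topology. *)
Notation Z3 := {ptws nat -> discrete_topology 'I_3}.

(* z |-> z + 1 in Z_3 (odometer): digit n is incremented mod 3 exactly when
   all lower digits are 2 (carry). *)
Definition Z3_succ (z : Z3) : Z3 := fun n =>
  if [forall m : 'I_n, nat_of_ord (z (nat_of_ord m)) == 2%N]
  then (inord ((z n).+1 %% 3) : 'I_3)
  else z n.

Definition Tmap (p : biseq * Z3) : biseq * Z3 := (shift p.1, Z3_succ p.2).
Definition Xspace : set (biseq * Z3) := [set p | X_sigma p.1].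

(* Self-induced: a dynamical system (X, T) with X a subset of an ambient
   topological space A (subspace topology) is self-induced if there is a
   nonempty proper clopen U of X such that the induced system (U, T_U),
   T_U(x) = T^{r_U(x)} x with r_U the first return time, is topologically
   conjugate to (X, T) via a homeomorphism phi : U -> X (inverse psi). *)
Definition self_induced (A : topologicalType) (X : set A) (T : A -> A) : Prop :=
  exists U : set A,
    [/\ U `<=` X, U !=set0, U <> X,
        @open (subspace X) U & @closed (subspace X) U] /\
    (* return times to U are finite, so T_U is defined on U *)
    (forall x, U x -> exists n, (0 < n)%N /\ U (iter n T x)) /\
    exists phi psi : A -> A,
      [/\ {within U, continuous phi}, {within X, continuous psi},
          (forall x, U x -> X (phi x) /\ psi (phi x) = x),
          (forall y, X y -> U (psi y) /\ phi (psi y) = y) &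
          (* phi o T_U = T o phi, with r_U(x) = n the first return time *)
          (forall x n, U x -> (0 < n)%N -> U (iter n T x) ->
             (forall m, (0 < m < n)%N -> ~ U (iter m T x)) ->
             phi (iter n T x) = T (phi x))].

(* Points of X_sigma are concatenations of the blocks sigma(0) = 01 and
   sigma(1) = 00, so a point has a 0 at every even coordinate exactly when its
   blocks start at even positions.  Let U be the clopen set of such points,
   times Z_3.  A point of U leaves U after one step of T and returns after
   exactly two, and the desubstitution x |-> (~ x_(2j+1))_j maps U onto X_sigma,
   turning S^2 into S.  As 2 is a unit of Z_3, halving turns z |-> z + 2 into
   z |-> z + 1; the product of the two maps conjugates T_U to T.  A point of U
   is given by the fixed point of sigma^2 whose j-th letter is the parity of the
   2-adic valuation of j + 1. *)

From Pilot Require Import Defs.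
From mathcomp Require Import all_boot all_order all_algebra.
From mathcomp Require Import all_classical all_reals all_analysis.
From mathcomp Require Import zify.

Set Implicit Arguments.
Unset Strict Implicit.
Unset Printing Implicit Defensive.

Import Order.TTheory GRing.Theory Num.Theory.
Local Open Scope classical_set_scope.

(** * The substitution on finite words *)

Lemma infix_nthP (T : eqType) (x0 : T) (u v : seq T) : reflect
  (exists2 p, p + size u <= size v & forall j, j < size u -> nth x0 u j = nth x0 v (p + j))
  (infix u v).
Proof.
apply: (iffP (@infixP _ u v)) => [[s [t ->]]|[p le_pv uE]].
  exists (size s); first by rewrite !size_cat addnA leq_addr.
  by move=> j lt_j; rewrite nth_cat ltnNge leq_addr /= addKn nth_cat lt_j.
exists (take p v), (drop (size u) (drop p v)).
suff {1}-> : u = take (size u) (drop p v) by rewrite !cat_take_drop.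
apply: (@eq_from_nth _ x0) => [|j lt_j]; last by rewrite nth_take // nth_drop uE.
by rewrite size_take size_drop; case: ltnP => //; lia.
Qed.

Lemma sigma_word_cons a w : sigma_word (a :: w) = [:: false; ~~ a] ++ sigma_word w.
Proof. by case: a. Qed.

Lemma sigma_word_cat u v : sigma_word (u ++ v) = sigma_word u ++ sigma_word v.
Proof. by rewrite /sigma_word map_cat flatten_cat. Qed.

Lemma size_sigma_word w : size (sigma_word w) = (size w).*2.
Proof. by elim: w => // a w IH; rewrite sigma_word_cons /= IH. Qed.

Lemma nth_sigma_word w i : nth false (sigma_word w) i = odd i && ~~ nth true w i./2.
Proof.
elim: w i => [|a w IH] i; first by rewrite !nth_nil andbF.
by rewrite sigma_word_cons; case: i => [|[|i]] //=; rewrite IH /= negbK.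
Qed.

Lemma sigma_iterS k a : sigma_iter k.+1 a = sigma_word (sigma_iter k a).
Proof. exact: iterS. Qed.

Lemma infix_sigma_word u v : infix u v -> infix (sigma_word u) (sigma_word v).
Proof. by move/infixP=> [s [t ->]]; rewrite !sigma_word_cat; apply: infix_infix. Qed.

Lemma infix_iter_sigma_word n u v :
  infix u v -> infix (iter n sigma_word u) (iter n sigma_word v).
Proof. by elim: n => [//|n IH] /IH; rewrite !iterS; apply: infix_sigma_word. Qed.

Lemma sigma_iter_no_11 k a i :
  ~~ (nth false (sigma_iter k a) i && nth false (sigma_iter k a) i.+1).
Proof.
case: k => [|k]; first by case: i => [|[|i]]; rewrite /sigma_iter /= ?andbF ?nth_nil.
by rewrite sigma_iterS !nth_sigma_word /=; case: (odd i); rewrite ?andbF.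
Qed.

(* Two odd positions of sigma(w) at distance 2 carry the complements of two
   consecutive letters of w, which cannot both be 1. *)
Lemma sigma_iterS_odd_pair k a r : odd r -> r + 2 < size (sigma_iter k.+1 a) ->
  nth false (sigma_iter k.+1 a) r || nth false (sigma_iter k.+1 a) (r + 2).
Proof.
move=> odd_r; rewrite sigma_iterS size_sigma_word !nth_sigma_word addn2 /= negbK odd_r /=.
rewrite -negb_and.
rewrite -muln2 => lt_r; have := odd_double_half r; rewrite odd_r -muln2 => r2E.
by rewrite !(set_nth_default false) ?sigma_iter_no_11 //; lia.
Qed.

(** * Points of [X_sigma] *)

Lemma size_subword (x : biseq) i n : size (subword x i n) = n.
Proof. by rewrite size_map size_iota. Qed.

Lemma nth_subword (x : biseq) i n j : j < n -> nth false (subword x i n) j = x (i + j%:Z)%R.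
Proof. by move=> lt_j; rewrite (nth_map 0) ?size_iota // nth_iota. Qed.

Lemma subword_cons (x : biseq) i n : subword x i n.+1 = x i :: subword x (i + 1)%R n.
Proof.
rewrite /subword /= addr0 -(addn0 1) iotaDl -map_comp.
by congr (_ :: _); apply: eq_map => j /=; congr x; lia.
Qed.

Lemma infix_subword (x : biseq) i s n L : s + n <= L ->
  infix (subword x (i + s%:Z)%R n) (subword x i L).
Proof.
move=> le_L; apply/(infix_nthP false); rewrite !size_subword; exists s => // j lt_j.
by rewrite !nth_subword //; [congr x; lia | lia].
Qed.

Definition occurs_at (x : biseq) (i : int) (n : nat) (w : seq bool) (p : nat) :=
  p + n <= size w /\ forall j, j < n -> x (i + Posz j)%R = nth false w (p + j).

Lemma X_sigmaP x :
  X_sigma x <-> forall i n, exists k a p, occurs_at x i n (sigma_iter k.+1 a) p.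
Proof.
split=> [xX i n|xE i n].
  have [a [[|k] [//= _ /(infix_nthP false)[p]]]] := xX i n.
  rewrite size_subword => le_p subwE.
  by exists k, a, p; split=> // j lt_j; rewrite -subwE ?nth_subword.
have [k [a [p [le_p xE']]]] := xE i n.
exists a, k.+1; split=> //; apply/(infix_nthP false); exists p; rewrite size_subword //.
by move=> j lt_j; rewrite nth_subword // xE'.
Qed.

Lemma shift_X x : X_sigma x -> X_sigma (Defs.shift x).
Proof.
move/X_sigmaP=> xX; apply/X_sigmaP => i n.
have [k [a [p [le_p xE]]]] := xX (i + 1)%R n.
by exists k, a, p; split=> // j lt_j; rewrite /Defs.shift -xE //; congr x; lia.
Qed.

Definition zero_on_evens (x : biseq) := forall j : int, x (2 * j)%R = false.

Lemma X_one_odd_offset x i d : X_sigma x -> x i -> x (i + (2 * d + 1)%N%:Z)%R = false.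
Proof.
move/X_sigmaP/(_ i (2 * d + 2)) => [k [a [p [_ xE]]]].
rewrite -{1}[i]addr0 !xE ?addn0 ?sigma_iterS ?nth_sigma_word; [|lia..].
by case/andP=> odd_p _; rewrite oddD odd_p addn1 /= oddM.
Qed.

Lemma zero_on_evens_occurs_at_even x i n k a p : zero_on_evens x -> 2 < n ->
  occurs_at x (2 * i)%R n (sigma_iter k.+1 a) p -> ~~ odd p.
Proof.
move=> x_even lt2n [le_p xE]; apply/negP => odd_p.
set w := sigma_iter k.+1 a in le_p xE.
have w0 : nth false w p = false.
  by rewrite -[p]addn0 -xE ?addr0 ?x_even //; apply: ltn_trans lt2n.
have w2 : nth false w (p + 2) = false.
  by rewrite -xE // (_ : (2 * i + Posz 2)%R = 2 * (i + 1))%R ?x_even //; lia.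
have /negP[] : ~~ (nth false w p || nth false w (p + 2)) by rewrite w0 w2.
by apply: sigma_iterS_odd_pair odd_p _; rewrite -/w; lia.
Qed.

Lemma X_one_at_1_or_3 x : X_sigma x -> zero_on_evens x -> x 1%R || x 3%R.
Proof.
move=> /X_sigmaP/(_ 0%R 4) [k [a [p xp]]] x_even.
have even_p := zero_on_evens_occurs_at_even (i := 0%R) (n := 4) x_even isT xp.
case: xp => le_p xE; rewrite -[1%R]add0r -[3%R]add0r !xE // (addnA p 1 2).
by apply: sigma_iterS_odd_pair; [rewrite addn1 /= even_p | lia].
Qed.

Lemma X_odd_one_zero_on_evens x j : X_sigma x -> x (2 * j + 1)%R -> zero_on_evens x.
Proof.
move=> xX xj m; apply/negP => xm.
have [lt_jm|le_mj] := ltP j m.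
  have := X_one_odd_offset `|(m - j - 1)%R|%N xX xj.
  by rewrite (_ : (2 * j + 1 + _)%R = 2 * m)%R ?xm //; lia.
have := X_one_odd_offset `|(j - m)%R|%N xX xm.
by rewrite (_ : (2 * m + _)%R = 2 * j + 1)%R ?xj //; lia.
Qed.

(** * Desubstitution *)

Definition sigma_seq (y : biseq) : biseq :=
  fun j => if (j %% 2 == 0)%Z then false else ~~ y (j %/ 2)%Z.

Definition desigma (x : biseq) : biseq := fun j => ~~ x (2 * j + 1)%R.

Lemma int_even_odd (i : int) : exists M (b : bool), i = (2 * M + Posz b)%R.
Proof. by exists (i %/ 2)%Z, ((i %% 2)%Z == 1%R); case: eqP; lia. Qed.

Lemma sigma_seq_even y j : sigma_seq y (2 * j)%R = false.
Proof. by rewrite /sigma_seq (_ : ((2 * j) %% 2)%Z = 0%R) //; lia. Qed.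

Lemma sigma_seq_odd y j : sigma_seq y (2 * j + 1)%R = ~~ y j.
Proof.
rewrite /sigma_seq (_ : ((2 * j + 1) %% 2)%Z = 1%R); last lia.
by rewrite (_ : ((2 * j + 1) %/ 2)%Z = j) //; lia.
Qed.

Lemma zero_on_evens_sigma_seq y : zero_on_evens (sigma_seq y).
Proof. exact: sigma_seq_even. Qed.

Lemma sigma_seqK : cancel sigma_seq desigma.
Proof. by move=> y; apply: funext => j; rewrite /desigma sigma_seq_odd negbK. Qed.

Lemma desigmaK x : zero_on_evens x -> sigma_seq (desigma x) = x.
Proof.
move=> x_even; apply: funext => j; have [M [[|] ->]] := int_even_odd j.
  by rewrite sigma_seq_odd /desigma negbK.
by rewrite addr0 sigma_seq_even x_even.
Qed.

Lemma subword_sigma_seq y J L :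
  subword (sigma_seq y) (2 * J)%R (2 * L) = sigma_word (subword y J L).
Proof.
elim: L J => [//|L IH] J; rewrite mulnS !subword_cons sigma_word_cons.
rewrite sigma_seq_even sigma_seq_odd -IH.
by congr [:: _, _ & subword _ _ _]; lia.
Qed.

Lemma sigma_seq_X y : X_sigma y -> X_sigma (sigma_seq y).
Proof.
move=> yX i n; have [M [b ->]] := int_even_odd i.
have [a [k [_ yMn]]] := yX M n.+1.
exists a, k.+1; split=> //; rewrite sigma_iterS.
apply: infix_trans (infix_sigma_word yMn); rewrite -subword_sigma_seq.
by apply: infix_subword; case: b; lia.
Qed.

Lemma desigma_X x : X_sigma x -> zero_on_evens x -> X_sigma (desigma x).
Proof.
move=> xX x_even; apply/X_sigmaP => i n.
have [[|k] [a [p xp]]] := (X_sigmaP x).1 xX (2 * i)%R (2 * n + 4).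
  by case: xp; rewrite sigma_iterS size_sigma_word /=; lia.
have even_p : ~~ odd p by apply: zero_on_evens_occurs_at_even x_even _ xp; lia.
have p2E := odd_double_half p; rewrite (negbTE even_p) add0n -muln2 in p2E.
case: xp; rewrite sigma_iterS size_sigma_word -muln2 => le_p xE.
exists k, a, p./2; split=> [|j lt_j]; first lia.
rewrite /desigma (_ : (2 * (i + Posz j) + 1)%R = 2 * i + Posz (2 * j + 1))%R; last lia.
rewrite xE; last lia.
rewrite nth_sigma_word (_ : p + (2 * j + 1) = true + (p./2 + j).*2); last lia.
rewrite half_bit_double oddD odd_double addbF andTb negbK (set_nth_default false) //; lia.
Qed.

Definition x_fix : biseq := fun j => odd (logn 2 `|(j + 1)%R|%N).

Lemma logn2_odd m : odd m -> logn 2 m = 0.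
Proof. by move=> odd_m; apply: logn_coprime; rewrite coprime2n. Qed.

Lemma x_fix_even j : x_fix (2 * j)%R = false.
Proof. by rewrite /x_fix logn2_odd //; lia. Qed.

Lemma x_fix_sigma2 : sigma_seq (sigma_seq x_fix) = x_fix.
Proof.
apply: funext => j; have [M [[|] ->]] := int_even_odd j; last first.
  by rewrite addr0 sigma_seq_even x_fix_even.
rewrite sigma_seq_odd; have [N [[|] ->]] := int_even_odd M; last first.
  rewrite addr0 sigma_seq_even /x_fix.
  rewrite (_ : `|(2 * (2 * N) + 1 + 1)%R|%N = 2 * `|(2 * N + 1)%R|%N); last lia.
  by rewrite lognM ?(logn2_odd (m := `|_|%N)) //; lia.
rewrite sigma_seq_odd negbK /x_fix.
rewrite (_ : `|(2 * (2 * N + 1) + 1 + 1)%R|%N = 2 ^ 2 * `|(N + 1)%R|%N); last lia.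
have [->|pos_N1] := posnP `|(N + 1)%R|%N; first by rewrite muln0.
by rewrite lognM ?expn_gt0 // pfactorK //= negbK.
Qed.

Lemma subword_x_fix_pow m J L :
  subword x_fix ((4 ^ m)%:Z * J)%R (4 ^ m * L) = iter (2 * m) sigma_word (subword x_fix J L).
Proof.
elim: m => [|m IH]; first by rewrite expn0 mul1r mul1n.
rewrite -{1}x_fix_sigma2 expnS mulnS !iterS -IH -!subword_sigma_seq.
by congr subword; lia.
Qed.

Lemma x_fix_window2 J : infix (subword x_fix J 2) (sigma_iter 2 false).
Proof.
rewrite !subword_cons; have [M [[|] ->]] := int_even_odd J.
  by rewrite (_ : (2 * M + 1 + 1 = 2 * (M + 1))%R) ?x_fix_even; [case: (x_fix _)|lia].
by rewrite addr0 x_fix_even; case: (x_fix _).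
Qed.

Lemma X_x_fix : X_sigma x_fix.
Proof.
move=> i n; exists false, (2 * n + 2); split; first lia.
have lt_n4n := ltn_expl n (isT : 1 < 4); set N := 4 ^ n in lt_n4n *.
have pos_N : (0 < Posz N)%R by rewrite ltz_nat expn_gt0.
have ge0_mod := modz_ge0 i (lt0r_neq0 pos_N); have lt_mod := ltz_pmod i pos_N.
have [J iE] : exists J, i = (Posz N * J + Posz `|(i %% Posz N)%Z|%N)%R.
  by exists (i %/ Posz N)%Z; have := divz_eq i (Posz N); lia.
rewrite iE; apply: (infix_trans (infix_subword (L := N * 2) _ _ _)); first lia.
rewrite subword_x_fix_pow /sigma_iter iterD.
exact: infix_iter_sigma_word (x_fix_window2 J).
Qed.

(** * Halving in [Z_3] *)

Fixpoint Z3_trunc (z : Z3) (n : nat) : nat :=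
  if n is m.+1 then Z3_trunc z m + z m * 3 ^ m else 0.

Lemma Z3_truncS z n : Z3_trunc z n.+1 = Z3_trunc z n + z n * 3 ^ n.
Proof. by []. Qed.

Lemma Z3_trunc_lt z n : Z3_trunc z n < 3 ^ n.
Proof.
elim: n => [//|n IH]; rewrite Z3_truncS expnS.
by have := ltn_ord (z n); have := expn_gt0 3 n; nia.
Qed.

Lemma Z3_truncS_mod z n : Z3_trunc z n.+1 %% 3 ^ n = Z3_trunc z n.
Proof. by rewrite Z3_truncS addnC modnMDl modn_small // Z3_trunc_lt. Qed.

Lemma Z3_trunc_inj z z' : (forall n, Z3_trunc z n = Z3_trunc z' n) -> z = z'.
Proof.
have digitE (y : Z3) n : nat_of_ord (y n) = Z3_trunc y n.+1 %/ 3 ^ n.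
  by rewrite Z3_truncS addnC divnMDl ?expn_gt0 // divn_small ?Z3_trunc_lt ?addn0.
by move=> zE; apply: funext => n; apply: val_inj; rewrite /= !digitE zE.
Qed.

Lemma Z3_trunc_top z n :
  (forall m, m < n -> nat_of_ord (z m) = 2) <-> (Z3_trunc z n).+1 = 3 ^ n.
Proof.
elim: n => [|n IH]; first by split.
have := Z3_trunc_lt z n; have := ltn_ord (z n); rewrite Z3_truncS expnS => lt_zn lt_t.
split=> [top|truncE].
  by have := IH.1 (fun m lt_mn => top m (ltnW lt_mn)); have := top n (ltnSn n); lia.
have zn : nat_of_ord (z n) = 2 by nia.
have {}truncE : (Z3_trunc z n).+1 = 3 ^ n by rewrite zn in truncE; lia.
by move=> m; rewrite ltnS leq_eqVlt => /predU1P[->|/(IH.2 truncE)].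
Qed.

Lemma Z3_carryP (z : Z3) n : reflect ((Z3_trunc z n).+1 = 3 ^ n)
  [forall m : 'I_n, nat_of_ord (z (nat_of_ord m)) == 2].
Proof.
apply: (iffP forallP) => [top|/Z3_trunc_top top m]; last exact/eqP/top.
by apply/Z3_trunc_top => m lt_mn; apply/eqP/(top (Ordinal lt_mn)).
Qed.

Lemma Z3_trunc_succ z n : Z3_trunc (Z3_succ z) n = (Z3_trunc z n).+1 %% 3 ^ n.
Proof.
elim: n => [|n IH]; first by rewrite modn1.
have pos_P : 0 < 3 ^ n by rewrite expn_gt0.
have := Z3_trunc_lt z n; have := ltn_ord (z n).
rewrite !Z3_truncS IH expnS /Z3_succ => lt_zn lt_t.
case: Z3_carryP => [carry|no_carry].
  rewrite carry modnn add0n inordK ?ltn_mod // -addSn carry -mulSn.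
  by rewrite muln_modl.
have lt_t1 : (Z3_trunc z n).+1 < 3 ^ n by rewrite ltn_neqAle; apply/andP; split; [apply/eqP|].
by rewrite !modn_small //; nia.
Qed.

Definition Z3_of_truncs (f : nat -> nat) : Z3 := fun n => inord (f n.+1 %/ 3 ^ n).

Lemma Z3_trunc_of_truncs f :
  (forall n, f n.+1 %% 3 ^ n = f n) -> (forall n, f n < 3 ^ n) ->
  forall n, Z3_trunc (Z3_of_truncs f) n = f n.
Proof.
move=> f_mod f_lt; elim=> [|n IH]; first by have := f_lt 0; case: (f 0).
rewrite Z3_truncS IH inordK; last by rewrite ltnS -ltnS ltn_divLR ?expn_gt0 // -expnS.
by rewrite -{1}(f_mod n) addnC -divn_eq.
Qed.

Definition Z3_scale (c : nat -> nat) (z : Z3) : Z3 :=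
  Z3_of_truncs (fun n => Z3_trunc z n * c n %% 3 ^ n).

Lemma Z3_trunc_scale c z : (forall n, c n.+1 = c n %[mod 3 ^ n]) ->
  forall n, Z3_trunc (Z3_scale c z) n = Z3_trunc z n * c n %% 3 ^ n.
Proof.
move=> c_mod; apply: Z3_trunc_of_truncs => [n|n]; last by rewrite ltn_mod expn_gt0.
by rewrite expnS modn_dvdm ?dvdn_mull // -modnMm c_mod Z3_truncS_mod modnMmr.
Qed.

Definition half3 (n : nat) : nat := (3 ^ n).+1./2.

Lemma half3E n : 2 * half3 n = (3 ^ n).+1.
Proof. by rewrite mul2n -[RHS]odd_double_half oddS oddX orbT. Qed.

Lemma half3S n : half3 n.+1 = half3 n + 3 ^ n.
Proof. by have := half3E n; have := half3E n.+1; rewrite expnS; lia. Qed.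

Definition Z3_half : Z3 -> Z3 := Z3_scale half3.
Definition Z3_double : Z3 -> Z3 := Z3_scale (fun=> 2).

Lemma Z3_trunc_half z n : Z3_trunc (Z3_half z) n = Z3_trunc z n * half3 n %% 3 ^ n.
Proof. by apply: Z3_trunc_scale => m; rewrite half3S modnDr. Qed.

Lemma Z3_trunc_double z n : Z3_trunc (Z3_double z) n = Z3_trunc z n * 2 %% 3 ^ n.
Proof. exact: Z3_trunc_scale. Qed.

Lemma Z3_doubleK : cancel Z3_double Z3_half.
Proof.
move=> z; apply: Z3_trunc_inj => n.
rewrite Z3_trunc_half Z3_trunc_double modnMml -mulnA half3E mulnS addnC modnMDl.
by rewrite modn_small ?Z3_trunc_lt.
Qed.

Lemma Z3_halfK : cancel Z3_half Z3_double.
Proof.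
move=> z; apply: Z3_trunc_inj => n.
rewrite Z3_trunc_double Z3_trunc_half modnMml -mulnA (mulnC _ 2) half3E.
by rewrite mulnS addnC modnMDl modn_small ?Z3_trunc_lt.
Qed.

Lemma Z3_half_succ2 z : Z3_half (Z3_succ (Z3_succ z)) = Z3_succ (Z3_half z).
Proof.
apply: Z3_trunc_inj => n; rewrite Z3_trunc_half !Z3_trunc_succ Z3_trunc_half.
have modS a : (a %% 3 ^ n).+1 %% 3 ^ n = a.+1 %% 3 ^ n by rewrite -addn1 modnDml addn1.
rewrite modS modnMml modS -addn2 mulnDl half3E.
by rewrite addnS -addSn modnDr.
Qed.

(** * Topology *)

Lemma near_coord (I : eqType) (K : I -> discreteTopologicalType) (f : prod_topology K) i :
  \forall g \near f, g i = f i.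
Proof.
apply: (discrete_cvg _ _ _).1 (@proj_continuous I K i f).
exact/fmap_filter/(@nbhs_filter (prod_topology K)).
Qed.

Lemma continuous_prod_discrete (T : topologicalType) (I : choiceType)
    (K : I -> discreteTopologicalType) (g : T -> prod_topology K) :
  (forall x i, \forall y \near x, g y i = g x i) -> continuous g.
Proof.
move=> g_loc x; apply/cvg_sup => i.
move: x; apply/(@continuousP _ (initial_topology (@^~ i))) => _ [B oB <-].
by rewrite openE => x Bx; apply: filterS (g_loc x i) => y /= ->.
Qed.

Lemma pair_continuous (T1 T2 U1 U2 : topologicalType) (f : T1 -> U1) (g : T2 -> U2) :
  continuous f -> continuous g -> continuous (fun p : T1 * T2 => (f p.1, g p.2)).
Proof.
move=> f_cont g_cont [x y] S [[A B] /= [fA gB] ABP].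
exists (f @^-1` A, g @^-1` B); first by split; [exact: f_cont | exact: g_cont].
by move=> [x' y'] [/= fx' gy']; apply: ABP.
Qed.

(* Instance search does not find these [Filter] instances on its own. *)
#[local] Instance Z3_nbhs_filter (z : Z3) : Filter (nbhs z) := @nbhs_filter Z3 z.

#[local] Instance pair_nbhs_filter (p : biseq * Z3) : Filter (nbhs p) :=
  @nbhs_filter (biseq * Z3)%type p.

Lemma near_Z3_digit (z : Z3) n : \forall z' \near z, z' n = z n.
Proof. exact: (@near_coord nat (fun=> discrete_topology 'I_3)). Qed.

Lemma near_biseq_coord (x : biseq) j : \forall y \near x, y j = x j.
Proof. exact: (@near_coord int (fun=> bool)). Qed.

Lemma near_Z3_trunc (z : Z3) n : \forall z' \near z, Z3_trunc z' n = Z3_trunc z n.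
Proof.
elim: n => [|n IH]; first by apply: filterS (near_Z3_digit z 0).
by apply: filterS2 IH (near_Z3_digit z n) => z' /= -> ->.
Qed.

Lemma Z3_scale_continuous c : continuous (Z3_scale c).
Proof.
apply: continuous_prod_discrete => z n; apply: filterS (near_Z3_trunc z n.+1) => z' zE.
by rewrite /Z3_scale /Z3_of_truncs zE.
Qed.

Lemma desigma_continuous : continuous desigma.
Proof.
apply: continuous_prod_discrete => x j; apply: filterS (near_biseq_coord x (2 * j + 1)%R).
by move=> y; rewrite /desigma => ->.
Qed.

Lemma sigma_seq_continuous : continuous sigma_seq.
Proof.
apply: continuous_prod_discrete => x j; apply: filterS (near_biseq_coord x (j %/ 2)%Z).
by move=> y; rewrite /sigma_seq => ->.
Qed.

(** * The induced system *)

Lemma near_fst_coord (p : biseq * Z3) j : \forall q \near p, q.1 j = p.1 j.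
Proof.
exists ([set x | x j = p.1 j], setT) => /=; last by move=> [x z] [/= ->].
by split; [exact: near_biseq_coord | exact: filterT].
Qed.

Lemma open_odd_one : open [set p : biseq * Z3 | exists j, p.1 (2 * j + 1)%R].
Proof.
rewrite openE => p [j pj]; apply: filterS (near_fst_coord p (2 * j + 1)%R) => q qj.
by exists j; rewrite qj.
Qed.

Lemma closed_zero_on_evens : closed [set p : biseq * Z3 | zero_on_evens p.1].
Proof.
rewrite -[X in closed X]setCK; apply: open_closedC; rewrite openE => p /= p_odd.
have [j pj] : exists j, p.1 (2 * j)%R.
  by apply: contrapT => p_even; apply: p_odd => j; apply/negbTE/negP => ?; apply: p_even; exists j.
apply: filterS (near_fst_coord p (2 * j)%R) => q qj q_even.
by move: (q_even j); rewrite qj pj.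
Qed.

Definition Xeven : set (biseq * Z3) := [set p | X_sigma p.1 /\ zero_on_evens p.1].

Lemma open_Xeven : open (Xeven : set (subspace Xspace)).
Proof.
apply/open_subspaceP; exists [set p : biseq * Z3 | exists j, p.1 (2 * j + 1)%R].
  exact: open_odd_one.
apply/seteqP; split=> p /=.
  by move=> [[j pj] pX]; split=> //; split=> //; apply: X_odd_one_zero_on_evens pj.
move=> [[pX p_even] _]; split=> //.
by case/orP: (X_one_at_1_or_3 pX p_even) => p1; [exists 0%R | exists 1%R].
Qed.

Lemma closed_Xeven : closed (Xeven : set (subspace Xspace)).
Proof.
apply/closed_subspaceP; exists [set p : biseq * Z3 | zero_on_evens p.1].
  exact: closed_zero_on_evens.
by apply/seteqP; split=> p /=; [move=> [? ?] | move=> [[]]].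
Qed.

Lemma x_fix_Xeven z : Xeven (x_fix, z).
Proof. by split; [exact: X_x_fix | exact: x_fix_even]. Qed.

Lemma Tmap2_Xeven p : Xeven p -> Xeven (iter 2 Tmap p).
Proof.
case: p => x z [/= xX x_even]; split; first exact/shift_X/shift_X.
by move=> j; rewrite /= /Defs.shift (_ : (2 * j + 1 + 1 = 2 * (j + 1))%R) ?x_even //; lia.
Qed.

Lemma Tmap_notin_Xeven p : Xeven p -> ~ Xeven (Tmap p).
Proof.
case: p => x z [/= xX x_even] [_ Tx_even].
have := X_one_at_1_or_3 xX x_even.
have := Tx_even 0%R; have := Tx_even 1%R; rewrite /= /Defs.shift.
by rewrite mulr0 mulr1 add0r => -> ->.
Qed.

Lemma Xeven_return_time p n : Xeven p -> 0 < n -> Xeven (iter n Tmap p) ->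
  (forall m, 0 < m < n -> ~ Xeven (iter m Tmap p)) -> n = 2.
Proof.
move=> Xp; case: n => [|[|[|n]]] // _ Xpn n_min; first by case: (Tmap_notin_Xeven Xp).
by case: (n_min 2 isT); apply: Tmap2_Xeven.
Qed.

Lemma Xeven_proper : Xeven <> Xspace.
Proof.
move=> XE; apply: (Tmap_notin_Xeven (x_fix_Xeven (fun=> ord0))).
by rewrite XE; apply: shift_X X_x_fix.
Qed.

Definition desubst (p : biseq * Z3) : biseq * Z3 := (desigma p.1, Z3_half p.2).
Definition resubst (p : biseq * Z3) : biseq * Z3 := (sigma_seq p.1, Z3_double p.2).

Lemma desubst_continuous : continuous desubst.
Proof. by apply: pair_continuous; [apply: desigma_continuous | apply: Z3_scale_continuous]. Qed.

Lemma resubst_continuous : continuous resubst.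
Proof. by apply: pair_continuous; [apply: sigma_seq_continuous | apply: Z3_scale_continuous]. Qed.

Lemma desubst_Tmap2 p : desubst (iter 2 Tmap p) = Tmap (desubst p).
Proof.
rewrite /desubst /Tmap /= Z3_half_succ2; congr (_, _).
by apply: funext => j; rewrite /desigma /Defs.shift; congr (~~ p.1 _); lia.
Qed.

Theorem mainTheorem13 : self_induced Xspace Tmap.
Proof.
exists Xeven; split; [split|split].
- by move=> p [].
- by exists (x_fix, fun=> ord0); apply: x_fix_Xeven.
- exact: Xeven_proper.
- exact: open_Xeven.
- exact: closed_Xeven.
- by move=> p Xp; exists 2; split=> //; apply: Tmap2_Xeven.
exists desubst, resubst; split.
- exact/continuous_subspaceT/desubst_continuous.
- exact/continuous_subspaceT/resubst_continuous.
- move=> [x z] [xX x_even]; split; first exact: desigma_X.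
  by rewrite /resubst /= desigmaK // Z3_halfK.
- move=> [y z] yX; split; first by split; [exact: sigma_seq_X | exact: zero_on_evens_sigma_seq].
  by rewrite /desubst /= sigma_seqK Z3_doubleK.
- move=> p n Xp n_gt0 Xpn n_min.
  by rewrite (Xeven_return_time Xp n_gt0 Xpn n_min) desubst_Tmap2.
Qed.
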